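(* Let $A$ and $B$ be C$^*$-algebras, where $A$ is unital with unit $1$. Let $T:A\to B$ be a linear map which is a $^*$-homomorphism at $1$. Then $T$ is a Jordan $^*$-homomorphism.
   Context: A map $T:A\to B$ between C$^*$-algebras is a $^*$-homomorphism at $z\in A$ if for all $a,b\in A$ with $ab^*=z$ one has $T(ab^* )=T(a)T(b)^*=T(z)$, and for all $c,d\in A$ with $c^*d=z$ one has $T(c^*d)=T(c)^*T(d)=T(z)$. A Jordan $^*$-homomorphism is a linear map $T$ with $T(a\circ b)=T(a)\circ T(b)$ for all $a,b$, where $a\circ b=\frac12(ab+ba)$, and $T(x^* )=T(x)^*$ for all $x$. *)

From HB Require Import structures.
From mathcomp Require Import all_boot all_order all_algebra.
From mathcomp Require Import complex.
From mathcomp Require Import all_classical all_reals all_analysis.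
Set Implicit Arguments. Unset Strict Implicit. Unset Printing Implicit Defensive.
Import Order.TTheory GRing.Theory Num.Theory.
Import numFieldNormedType.Exports.
Local Open Scope ring_scope.
Local Open Scope complex_scope.

Section CStar.
Variable R : realType.
Local Notation C := (R[i]).

Definition is_cstar_algebra (A : completeNormedModType C)
  (mul : A -> A -> A) (star : A -> A) : Prop :=
  (forall x y z : A, mul x (mul y z) = mul (mul x y) z) /\
      (forall (a : C) (x y z : A), mul (a *: x + y) z = a *: mul x z + mul y z) /\
      (forall (a : C) (x y z : A), mul z (a *: x + y) = a *: mul z x + mul z y) /\
      (forall (a : C) (x y : A), star (a *: x + y) = (a^*)%C *: star x + star y) /\
      (forall x : A, star (star x) = x) /\
      (forall x y : A, star (mul x y) = mul (star y) (star x)) /\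
      (forall x y : A, `|mul x y| <= `|x| * `|y|) /\
      (forall x : A, `|mul (star x) x| = `|x| ^+ 2).

Definition is_unit_elt (A : Type) (mul : A -> A -> A) (one : A) : Prop :=
  forall x, mul one x = x /\ mul x one = x.

Definition is_C_linear (A B : completeNormedModType C) (T : A -> B) : Prop :=
  forall (a : C) (x y : A), T (a *: x + y) = a *: T x + T y.

Definition star_hom_at (A B : completeNormedModType C)
  (mulA : A -> A -> A) (starA : A -> A) (mulB : B -> B -> B) (starB : B -> B)
  (T : A -> B) (z : A) : Prop :=
  (forall a b : A, mulA a (starA b) = z ->
      T (mulA a (starA b)) = mulB (T a) (starB (T b)) /\
      mulB (T a) (starB (T b)) = T z) /\
  (forall c d : A, mulA (starA c) d = z ->
      T (mulA (starA c) d) = mulB (starB (T c)) (T d) /\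
      mulB (starB (T c)) (T d) = T z).

Definition jordan (A : completeNormedModType C) (mul : A -> A -> A) (a b : A) : A :=
  (2%:R)^-1 *: (mul a b + mul b a).

Definition jordan_star_hom (A B : completeNormedModType C)
  (mulA : A -> A -> A) (starA : A -> A) (mulB : B -> B -> B) (starB : B -> B)
  (T : A -> B) : Prop :=
  is_C_linear T /\
  (forall a b : A, T (jordan mulA a b) = jordan mulB (T a) (T b)) /\
  (forall x : A, T (starA x) = starB (T x)).

End CStar.

(* p := T 1 is a projection, and for a unitary u the hypothesis at 1 gives
   T u (T u)^* = (T u)^* T u = p, whence p T u = T u = T u p by the C*-identity.
   Unitaries span a unital C*-algebra (a self-adjoint h of norm <= 1/2 is half the
   sum of u := h + i sqrt(1 - h^2) and u^* ), so T takes values in the corner p B p.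
   If a and 1 - a are invertible, the hypothesis at 1 turns their inverses into
   inverses of T a and p - T a in p B p, and comparing with the inverse a^-1 + (1-a)^-1
   of a (1 - a) yields T (a^2) = (T a)^2.  Every x is an affine image of such an a
   (Neumann series), so T preserves squares, hence Jordan products and the triple
   products x y x.  For unitary u this gives T u^* = (T u)^* (T u T u^* T u) (T u)^* = (T u)^*,
   and spanning again shows that T commutes with the involutions.  Completeness enters
   only through the contraction principle, which yields both the Neumann series and
   the square root. *)

From HB Require Import structures.
From mathcomp Require Import all_boot all_order all_algebra.
From mathcomp Require Import complex.
From mathcomp Require Import all_classical all_reals all_analysis.
From mathcomp Require Import lra.
Set Implicit Arguments. Unset Strict Implicit. Unset Printing Implicit Defensive.
Import Order.TTheory GRing.Theory Num.Theory.
Import numFieldNormedType.Exports.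
Local Open Scope ring_scope.
Local Open Scope complex_scope.

Section RealNorm.
Variables (R : realType) (A : normedModType R[i]).

(* The norm of a normed R[i]-module is R[i]-valued with zero imaginary part. *)
Definition rnorm (x : A) : R := complex.Re `|x|.

Lemma rnormE x : `|x| = (rnorm x)%:C.
Proof.
by rewrite /rnorm; case: `|x| (ger0_Im (normr_ge0 x)) => a b /= ->.
Qed.

Lemma rnorm_ge0 x : 0 <= rnorm x.
Proof. by rewrite -lecR -rnormE normr_ge0. Qed.

Lemma rnorm0 : rnorm 0 = 0.
Proof. by rewrite /rnorm normr0. Qed.

Lemma rnorm0_eq0 x : rnorm x = 0 -> x = 0.
Proof. by move=> x0; apply/normr0_eq0; rewrite rnormE x0. Qed.

Lemma ler_rnormD x y : rnorm (x + y) <= rnorm x + rnorm y.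
Proof. by have := ler_normD x y; rewrite !rnormE -rmorphD lecR. Qed.

Lemma rnormN x : rnorm (- x) = rnorm x.
Proof. by rewrite /rnorm normrN. Qed.

Lemma rnorm_distC x y : rnorm (x - y) = rnorm (y - x).
Proof. by rewrite /rnorm distrC. Qed.

Lemma rnormZ (a : R) x : rnorm (a%:C *: x) = `|a| * rnorm x.
Proof.
apply: (@complexI R); rewrite -rnormE normrZ rnormE rmorphM; congr (_ * _).
by rewrite normc_def /= expr0n /= addr0 sqrtr_sqr.
Qed.

Lemma rnormMn x n : rnorm (x *+ n) = rnorm x *+ n.
Proof. by apply: (@complexI R); rewrite -rnormE normrMn rnormE rmorphMn. Qed.

Lemma rnorm_le_contr_eq0 (q : R) x : q < 1 -> rnorm x <= q * rnorm x -> x = 0.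
Proof.
move=> q_lt1 le_x; apply/rnorm0_eq0/le_anti; rewrite rnorm_ge0 andbT.
by have := rnorm_ge0 x; nra.
Qed.

Lemma rnorm_scale_small x : exists2 c : R, 0 < c & 2 * rnorm (c%:C *: x) <= 1.
Proof.
have l_gt0 : 0 < 2 * rnorm x + 1 by have := rnorm_ge0 x; lra.
exists (2 * rnorm x + 1)^-1; first by rewrite invr_gt0.
rewrite rnormZ ger0_norm; last by rewrite invr_ge0 ltW.
by rewrite mulrCA ler_pdivrMl // mulr1 lerDl.
Qed.

End RealNorm.

Lemma scale_half_mul2n (R : realType) (V : lmodType R[i]) (v : V) : 2^-1 *: (v *+ 2) = v.
Proof. by rewrite -[v *+ 2]scaler_nat scalerA mulVf ?pnatr_eq0 // scale1r. Qed.

Lemma mulr2n_inj (R : realType) (V : lmodType R[i]) : injective (fun v : V => v *+ 2).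
Proof. by move=> u v /(congr1 (fun w => 2^-1 *: w)); rewrite /= !scale_half_mul2n. Qed.

Lemma half_lt1 (R : realType) : 2^-1 < 1 :> R.
Proof. by rewrite invf_lt1 // ltr1n. Qed.

Section Completeness.
Variables (R : realType) (A : completeNormedModType R[i]).

Lemma rnorm_cauchy_cvg (u : A ^nat) :
  (forall e, 0 < e -> exists N, forall n, (N <= n)%N -> rnorm (u n - u N) < e) ->
  cvgn u.
Proof.
move=> small; apply/cauchy_cvgP/cauchyP => -[a b]; rewrite ltcE /= => /andP[/eqP b0 a0].
have [N uN] := small a a0; exists (u N); exists N => // n /= le_Nn.
by rewrite -ball_normE /ball_ /= b0 complexr0 rnormE ltcR rnorm_distC uN.
Qed.

Lemma rnorm_cvg_lt (u : A ^nat) : cvgn u ->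
  forall e, 0 < e -> exists N, forall n, (N <= n)%N -> rnorm (limn u - u n) < e.
Proof.
move=> cu e e0; have e0C : 0 < e%:C by rewrite ltcR.
have [N _ uN] := cvgr_dist_lt u (limn u) cu _ e0C.
by exists N => n le_Nn; have := uN n le_Nn; rewrite /= rnormE ltcR.
Qed.

Section Contraction.
Variables (F : A -> A) (rho q : R).
Hypotheses (rho_ge0 : 0 <= rho) (q_ge0 : 0 <= q) (q_lt1 : q < 1).
Hypothesis F_ball : forall x, rnorm x <= rho -> rnorm (F x) <= rho.
Hypothesis F_contr : forall x y, rnorm x <= rho -> rnorm y <= rho ->
  rnorm (F x - F y) <= q * rnorm (x - y).

Lemma ball_contraction_fixpoint_unique x y : rnorm x <= rho -> rnorm y <= rho ->
  F x = x -> F y = y -> x = y.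
Proof.
move=> x_ball y_ball Fx Fy; apply/subr0_eq/(rnorm_le_contr_eq0 q_lt1).
by rewrite -{1}Fx -{1}Fy F_contr.
Qed.

Local Notation orbit n := (iter n F 0).

Let orbit_ball n : rnorm (orbit n) <= rho.
Proof. by elim: n => [|n IH]; [rewrite /= rnorm0 | exact: F_ball]. Qed.

(* Both points lie in the ball, and n applications of F shrink their distance by q ^+ n. *)
Let orbit_dist n m : rnorm (orbit (n + m) - orbit n) <= 2 * rho * q ^+ n.
Proof.
elim: n m => [|n IH] m.
  by rewrite add0n subr0 expr0 mulr1; have := orbit_ball m; have := rho_ge0; lra.
rewrite addSn exprS mulrCA.
apply: le_trans (F_contr (orbit_ball _) (orbit_ball _)) _.
by apply: ler_wpM2l; last exact: IH.
Qed.

Let orbit_cvg : cvgn (fun n => orbit n).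
Proof.
apply: rnorm_cauchy_cvg => e e0.
have q_lt1' : `|q| < 1 by rewrite ger0_norm.
have [N _ small] := cvgr_dist_lt _ _ (cvg_geometric (2 * rho) q_lt1') _ e0.
exists N => n /subnKC <-; apply: le_lt_trans (orbit_dist _ _) _.
have := small N (leqnn N); rewrite /= sub0r normrN ger0_norm //.
by rewrite mulr_ge0 ?exprn_ge0 ?mulr_ge0.
Qed.

Lemma ball_contraction_fixpoint : exists2 l, rnorm l <= rho & F l = l.
Proof.
have near_lim := rnorm_cvg_lt orbit_cvg; set l := limn _ in near_lim *.
have l_ball : rnorm l <= rho.
  apply/ler_addgt0Pr => e e0; have [N lN] := near_lim e e0.
  have := lN N (leqnn N); have := orbit_ball N.
  by have := ler_rnormD (l - orbit N) (orbit N); rewrite subrK; lra.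
exists l => //; apply/subr0_eq/rnorm0_eq0/le_anti; rewrite rnorm_ge0 andbT.
apply/ler_addgt0Pr => e e0; rewrite add0r.
have [N lN] := near_lim (e / 2) (divr_gt0 e0 (ltr0n _ 2)).
have -> : F l - l = (F l - F (orbit N)) + (orbit N.+1 - l) by rewrite addrA subrK.
have := ler_rnormD (F l - F (orbit N)) (orbit N.+1 - l).
have := F_contr l_ball (orbit_ball N); have := lN N (leqnn N).
have := lN N.+1 (leqnSn N); rewrite [rnorm (orbit N.+1 - l)]rnorm_distC.
by have := rnorm_ge0 (l - orbit N); have := q_ge0; have := q_lt1; nra.
Qed.

End Contraction.
End Completeness.

Section CLinear.
Variables (R : realType) (A B : completeNormedModType R[i]) (T : A -> B).
Hypothesis HT : is_C_linear T.

Lemma C_linearD x y : T (x + y) = T x + T y.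
Proof. by have := HT 1 x y; rewrite !scale1r. Qed.

Lemma C_linear0 : T 0 = 0.
Proof. by apply/(addrI (T 0)); rewrite -C_linearD !addr0. Qed.

Lemma C_linearZ a x : T (a *: x) = a *: T x.
Proof. by have := HT a x 0; rewrite !addr0 C_linear0 addr0. Qed.

Lemma C_linearN x : T (- x) = - T x.
Proof. by rewrite -scaleN1r C_linearZ scaleN1r. Qed.

Lemma C_linearB x y : T (x - y) = T x - T y.
Proof. by rewrite C_linearD C_linearN. Qed.

Lemma C_linearMn x n : T (x *+ n) = T x *+ n.
Proof. by rewrite -[x *+ n]scaler_nat C_linearZ scaler_nat. Qed.

End CLinear.

Section CStarAlgebra.
Variables (R : realType) (A : completeNormedModType R[i]).
Variables (mul : A -> A -> A) (star : A -> A).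
Hypothesis HA : is_cstar_algebra mul star.

Lemma cmulA x y z : mul x (mul y z) = mul (mul x y) z.
Proof. by case: HA. Qed.

Lemma cmul_linearl z : is_C_linear (mul^~ z).
Proof. by case: HA => _ [mulZDl _] a x y; apply: mulZDl. Qed.

Lemma cmul_linearr z : is_C_linear (mul z).
Proof. by case: HA => _ [_ [mulZDr _]] a x y; apply: mulZDr. Qed.

Lemma cmulDl x y z : mul (x + y) z = mul x z + mul y z.
Proof. exact: C_linearD (cmul_linearl z) x y. Qed.
Lemma cmulDr x y z : mul z (x + y) = mul z x + mul z y.
Proof. exact: C_linearD (cmul_linearr z) x y. Qed.
Lemma cmulZl a x z : mul (a *: x) z = a *: mul x z.
Proof. exact: C_linearZ (cmul_linearl z) a x. Qed.
Lemma cmulZr a x z : mul z (a *: x) = a *: mul z x.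
Proof. exact: C_linearZ (cmul_linearr z) a x. Qed.
Lemma cmulBl x y z : mul (x - y) z = mul x z - mul y z.
Proof. exact: C_linearB (cmul_linearl z) x y. Qed.
Lemma cmulBr x y z : mul z (x - y) = mul z x - mul z y.
Proof. exact: C_linearB (cmul_linearr z) x y. Qed.

Lemma cstarK x : star (star x) = x.
Proof. by case: HA => _ [_ [_ [_ [+ _]]]]. Qed.

Lemma cstarM x y : star (mul x y) = mul (star y) (star x).
Proof. by case: HA => _ [_ [_ [_ [_ [+ _]]]]]. Qed.

Lemma cstar_conjlinear a x y : star (a *: x + y) = (a^*)%C *: star x + star y.
Proof. by case: HA => _ [_ [_ [+ _]]]. Qed.

Lemma cstarD x y : star (x + y) = star x + star y.
Proof. by have := cstar_conjlinear 1 x y; rewrite conjc1 !scale1r. Qed.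

Lemma cstar0 : star 0 = 0.
Proof. by apply/(addrI (star 0)); rewrite -cstarD !addr0. Qed.

Lemma cstarZ a x : star (a *: x) = (a^*)%C *: star x.
Proof. by have := cstar_conjlinear a x 0; rewrite !addr0 cstar0 addr0. Qed.

Lemma cstarN x : star (- x) = - star x.
Proof. by rewrite -scaleN1r cstarZ rmorphN1 scaleN1r. Qed.

Lemma cstarB x y : star (x - y) = star x - star y.
Proof. by rewrite cstarD cstarN. Qed.

Lemma rnorm_cmul_le x y : rnorm (mul x y) <= rnorm x * rnorm y.
Proof.
case: HA => _ [_ [_ [_ [_ [_ [+ _]]]]]] => /(_ x y).
by rewrite !rnormE -rmorphM lecR.
Qed.

Lemma rnorm_cstar_id x : rnorm (mul (star x) x) = rnorm x ^+ 2.
Proof.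
case: HA => _ [_ [_ [_ [_ [_ [_ /(_ x)]]]]]].
by rewrite !rnormE -rmorphXn => /complexI.
Qed.

Lemma rnorm_cstar x : rnorm (star x) = rnorm x.
Proof.
suff le_star y : rnorm y <= rnorm (star y).
  by apply/le_anti; rewrite le_star -{2}[x]cstarK le_star.
have := rnorm_cmul_le (star y) y; rewrite rnorm_cstar_id.
by have := rnorm_ge0 y; have := rnorm_ge0 (star y); nra.
Qed.

Lemma cstar_mul_eq0 x : mul (star x) x = 0 -> x = 0.
Proof.
move=> xx0; have := rnorm_cstar_id x; rewrite xx0 rnorm0 => /esym/eqP.
by rewrite expf_eq0 /= => /eqP/rnorm0_eq0.
Qed.

Lemma cmul_star_eq0 x : mul x (star x) = 0 -> x = 0.
Proof.
move=> xx0; rewrite -[x]cstarK -cstar0; congr star.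
by apply: cstar_mul_eq0; rewrite cstarK.
Qed.

Lemma cmul_triple x y :
  mul (mul x y) x *+ 2 = mul x (mul x y + mul y x) + mul (mul x y + mul y x) x
                         - (mul (mul x x) y + mul y (mul x x)).
Proof.
rewrite cmulDr cmulDl !cmulA mulr2n.
by rewrite [_ + mul (mul y x) x]addrC addrACA [X in X - _]addrC addrK.
Qed.

End CStarAlgebra.

Lemma conjc_i (R : rcfType) : ('i : R[i])^* = - 'i.
Proof. by apply/eqP; rewrite eq_complex /= oppr0 !eqxx. Qed.

Section UnitalCStarAlgebra.
Variables (R : realType) (A : completeNormedModType R[i]).
Variables (mul : A -> A -> A) (star : A -> A) (one : A).
Hypotheses (HA : is_cstar_algebra mul star) (Hone : is_unit_elt mul one).

Lemma cmul1l x : mul one x = x. Proof. by case: (Hone x). Qed.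
Lemma cmul1r x : mul x one = x. Proof. by case: (Hone x). Qed.

Lemma cstar1 : star one = one.
Proof.
have := congr1 star (cmul1r (star one)).
by rewrite (cstarM HA) !(cstarK HA) cmul1r.
Qed.

Lemma rnorm1_le1 : rnorm one <= 1.
Proof.
have := rnorm_cstar_id HA one; rewrite cstar1 cmul1l.
by have := rnorm_ge0 one; nra.
Qed.

Definition is_inverse (x y : A) := mul x y = one /\ mul y x = one.

Definition unitary (u : A) := is_inverse u (star u).

Lemma is_inverseZ (c : R[i]) x y : c != 0 -> is_inverse x y ->
  is_inverse (c *: x) (c^-1 *: y).
Proof.
move=> c_neq0 [xy yx]; split; rewrite (cmulZl HA) (cmulZr HA) scalerA.
- by rewrite mulfV // scale1r xy.
- by rewrite mulVf // scale1r yx.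
Qed.

Lemma unitary_cstar u : unitary u -> unitary (star u).
Proof. by case=> uu' u'u; split; rewrite (cstarK HA). Qed.

Lemma unitary1 : unitary one.
Proof. by split; rewrite cstar1 cmul1l. Qed.

Lemma one_sub_invertible k : 2 * rnorm k <= 1 -> exists y, is_inverse (one - k) y.
Proof.
move=> k_small; have k_ge0 := rnorm_ge0 k.
pose F x := one + mul k x.
have F_ball x : rnorm x <= 2 -> rnorm (F x) <= 2.
  have := ler_rnormD one (mul k x); have := rnorm_cmul_le HA k x.
  by have := rnorm_ge0 x; have := rnorm1_le1; nra.
have F_contr x z : rnorm x <= 2 -> rnorm z <= 2 ->
    rnorm (F x - F z) <= 2^-1 * rnorm (x - z).
  move=> _ _; rewrite /F opprD addrACA subrr add0r -(cmulBr HA).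
  have := rnorm_cmul_le HA k (x - z); have := rnorm_ge0 (x - z); nra.
have half_ge0 : 0 <= 2^-1 :> R by rewrite invr_ge0.
have [y _ Fy] := ball_contraction_fixpoint (ler0n _ 2) half_ge0 (half_lt1 R) F_ball F_contr.
(* y = one + k y; the commutator [k, y] is then a fixed point of the contraction mul k. *)
have ky : mul k y = mul y k.
  apply/subr0_eq/(rnorm_le_contr_eq0 (half_lt1 R)); set d := mul k y - mul y k.
  have d_fix : d = mul k d.
    rewrite (cmulBr HA) [mul k (mul y k)](cmulA HA) /d -{1 2}Fy /F.
    by rewrite (cmulDr HA) (cmulDl HA) cmul1l cmul1r opprD addrACA subrr add0r.
  rewrite {1}d_fix; have := rnorm_cmul_le HA k d.
  by have := rnorm_ge0 d; nra.
have inv_r : mul (one - k) y = one by rewrite (cmulBl HA) cmul1l -{1}Fy addrK.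
by exists y; split; rewrite // (cmulBr HA) cmul1r -ky -inv_r (cmulBl HA) cmul1l.
Qed.

Lemma half_sqr_fixpoint k : star k = k -> 4 * rnorm k <= 1 ->
  exists s, [/\ star s = s, 2 * rnorm s <= 1 & s *+ 2 = k + mul s s].
Proof.
move=> k_sa k_small; have k_ge0 := rnorm_ge0 k.
pose F s := 2^-1 *: (k + mul s s).
have rnormF (v : A) : rnorm (2^-1 *: v) = 2^-1 * rnorm v.
  apply: (@complexI R); rewrite -rnormE normrZ normfV normr_nat rnormE.
  by rewrite rmorphM fmorphV rmorph_nat.
have F_ball s : rnorm s <= 2^-1 -> rnorm (F s) <= 2^-1.
  move=> s_small; rewrite rnormF.
  have := ler_rnormD k (mul s s); have := rnorm_cmul_le HA s s.
  by have := rnorm_ge0 s; nra.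
have F_contr a b : rnorm a <= 2^-1 -> rnorm b <= 2^-1 ->
    rnorm (F a - F b) <= 2^-1 * rnorm (a - b).
  move=> a_small b_small; rewrite /F -scalerBr opprD addrACA subrr add0r rnormF.
  have -> : mul a a - mul b b = mul a (a - b) + mul (a - b) b.
    by rewrite (cmulBr HA) (cmulBl HA) addrA subrK.
  have := ler_rnormD (mul a (a - b)) (mul (a - b) b).
  have := rnorm_cmul_le HA a (a - b); have := rnorm_cmul_le HA (a - b) b.
  by have := rnorm_ge0 a; have := rnorm_ge0 b; have := rnorm_ge0 (a - b); nra.
have half_ge0 : 0 <= 2^-1 :> R by rewrite invr_ge0.
have [s s_small Fs] := ball_contraction_fixpoint half_ge0 half_ge0 (half_lt1 R) F_ball F_contr.
have F_star : F (star s) = star s.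
  by rewrite -[in RHS]Fs /F (cstarZ HA) conjc_inv conjc_nat (cstarD HA) k_sa (cstarM HA).
exists s; split.
- have star_small : rnorm (star s) <= 2^-1 by rewrite (rnorm_cstar HA).
  exact: (ball_contraction_fixpoint_unique (half_lt1 R) F_contr star_small s_small F_star Fs).
- by rewrite -(ler_pM2l (_ : 0 < 2^-1)) ?invr_gt0 // mulrA mulVf ?mul1r ?mulr1.
- by rewrite -[in LHS]Fs /F -scaler_nat scalerA mulfV ?pnatr_eq0 // scale1r.
Qed.

Lemma commute_half_sqr_fixpoint h k s : mul h k = mul k h ->
  2 * rnorm s <= 1 -> s *+ 2 = k + mul s s -> mul h s = mul s h.
Proof.
move=> hk s_small s_fix; set d := mul h s - mul s h.
have d2 : d *+ 2 = mul d s + mul s d.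
  rewrite mulrnBl -(C_linearMn (cmul_linearr HA h)) -(C_linearMn (cmul_linearl HA h)) s_fix.
  rewrite (cmulDr HA) (cmulDl HA) hk opprD addrACA subrr add0r.
  by rewrite /d (cmulBl HA) (cmulBr HA) !(cmulA HA) addrA subrK.
apply/subr0_eq/(rnorm_le_contr_eq0 (half_lt1 R)).
have rnorm_d2 : rnorm d *+ 2 = rnorm (mul d s + mul s d) by rewrite -rnormMn d2.
have := ler_rnormD (mul d s) (mul s d).
have := rnorm_cmul_le HA d s; have := rnorm_cmul_le HA s d.
by have := rnorm_ge0 s; have := rnorm_ge0 d; move: rnorm_d2; rewrite mulr2n; nra.
Qed.

(* s is the small solution of (one - s)^2 = one - h^2, i.e. of s = (h^2 + s^2) / 2. *)
Lemma cstar_sqrt_one_sub_sqr h : star h = h -> 2 * rnorm h <= 1 ->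
  exists r, [/\ star r = r, mul r r = one - mul h h & mul h r = mul r h].
Proof.
move=> h_sa h_small.
have hh_sa : star (mul h h) = mul h h by rewrite (cstarM HA) h_sa.
have hh_small : 4 * rnorm (mul h h) <= 1.
  by have := rnorm_cmul_le HA h h; have := rnorm_ge0 h; nra.
have [s [s_sa s_small s_fix]] := half_sqr_fixpoint hh_sa hh_small.
have hs : mul h s = mul s h.
  exact: (commute_half_sqr_fixpoint (cmulA HA h h h) s_small s_fix).
exists (one - s); split.
- by rewrite (cstarB HA) cstar1 s_sa.
- rewrite (cmulBl HA) cmul1l !(cmulBr HA) cmul1r.
  have -> : mul h h = s *+ 2 - mul s s by rewrite s_fix addrK.
  by rewrite mulr2n !opprB opprD addrACA [in RHS]addrA.
- by rewrite (cmulBl HA) (cmulBr HA) cmul1l cmul1r hs.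
Qed.

Lemma selfadjoint_unitary_mean h : star h = h -> 2 * rnorm h <= 1 ->
  exists2 u, unitary u & h = 2^-1 *: (u + star u).
Proof.
move=> h_sa h_small; have [r [r_sa rr hr]] := cstar_sqrt_one_sub_sqr h_sa h_small.
have star_u : star (h + 'i *: r) = h - 'i *: r.
  by rewrite (cstarD HA) (cstarZ HA) h_sa r_sa conjc_i scaleNr.
have ii : ('i : R[i]) * 'i = -1 by rewrite -expr2 sqr_i.
exists (h + 'i *: r); last first.
  by rewrite star_u addrACA subrr addr0 -mulr2n scale_half_mul2n.
rewrite /unitary /is_inverse star_u; split.
- rewrite (cmulDl HA) !(cmulBr HA) !(cmulZr HA) !(cmulZl HA) scalerA ii scaleN1r.
  by rewrite hr opprK addrA subrK rr addrC subrK.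
- rewrite (cmulBl HA) !(cmulDr HA) !(cmulZr HA) !(cmulZl HA) scalerA ii scaleN1r.
  by rewrite hr opprD addrA addrK opprK rr addrC subrK.
Qed.

Lemma selfadjoint_unitary_comb h : star h = h ->
  exists c u, unitary u /\ h = c *: (u + star u).
Proof.
move=> h_sa; have [c c_gt0 hc_small] := rnorm_scale_small h.
have hc_sa : star (c%:C *: h) = c%:C *: h by rewrite (cstarZ HA) conjc_real h_sa.
have [u u_unitary hc] := selfadjoint_unitary_mean hc_sa hc_small.
exists (c^-1%:C * 2^-1), u; split => //.
by rewrite -scalerA -hc scalerA -rmorphM mulVf ?gt_eqF // scale1r.
Qed.

Lemma cstar_cartesian x : exists h1 h2,
  [/\ star h1 = h1, star h2 = h2 & x *+ 2 = h1 + 'i *: h2].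
Proof.
exists (x + star x), ('i *: (star x - x)); split.
- by rewrite (cstarD HA) (cstarK HA) addrC.
- by rewrite (cstarZ HA) (cstarB HA) (cstarK HA) conjc_i scaleNr -scalerN opprB.
- rewrite scalerA -expr2 sqr_i scaleN1r opprB.
  by rewrite addrACA subrr addr0 mulr2n.
Qed.

Lemma unitary_span (P : A -> Prop) :
  (forall (a : R[i]) x y, P x -> P y -> P (a *: x + y)) ->
  (forall u, unitary u -> P u) -> forall x, P x.
Proof.
move=> P_lin P_unitary.
have P1 := P_unitary _ unitary1.
have P0 : P 0 by have := P_lin (-1) _ _ P1 P1; rewrite scaleN1r addNr.
have PZ a x : P x -> P (a *: x) by move=> Px; have := P_lin a _ _ Px P0; rewrite addr0.
have PD x y : P x -> P y -> P (x + y).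
  by move=> Px Py; have := P_lin 1 _ _ Px Py; rewrite scale1r.
have P_sa h : star h = h -> P h.
  move=> /selfadjoint_unitary_comb[c [u [u_unitary ->]]].
  by apply/PZ/PD; apply: P_unitary => //; exact: unitary_cstar.
move=> x; have [h1 [h2 [h1_sa h2_sa x2]]] := cstar_cartesian x.
by rewrite -[x]scale_half_mul2n x2; apply/PZ/PD; [exact: P_sa | exact/PZ/P_sa].
Qed.

End UnitalCStarAlgebra.

Section StarHomAtOne.
Variables (R : realType) (A B : completeNormedModType R[i]).
Variables (mulA : A -> A -> A) (starA : A -> A) (mulB : B -> B -> B) (starB : B -> B).
Variables (one : A) (T : A -> B).
Hypotheses (HA : is_cstar_algebra mulA starA) (HB : is_cstar_algebra mulB starB).
Hypotheses (Hone : is_unit_elt mulA one) (HT : is_C_linear T).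
Hypothesis Hhom : star_hom_at mulA starA mulB starB T one.

Local Notation p := (T one).
Local Notation is_inverse := (is_inverse mulA one).
Local Notation unitary := (unitary mulA starA one).
Local Notation sqr_preserved x := (T (mulA x x) = mulB (T x) (T x)).

Lemma hom_mul_star a b : mulA a (starA b) = one -> mulB (T a) (starB (T b)) = p.
Proof. by move=> ab; case: (Hhom.1 a b ab). Qed.

Lemma hom_star_mul c d : mulA (starA c) d = one -> mulB (starB (T c)) (T d) = p.
Proof. by move=> cd; case: (Hhom.2 c d cd). Qed.

Lemma T1_T1_star : mulB p (starB p) = p.
Proof. by apply: hom_mul_star; rewrite (cstar1 HA Hone) (cmul1l Hone). Qed.

Lemma star_T1 : starB p = p.
Proof. by rewrite -T1_T1_star (cstarM HB) (cstarK HB). Qed.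

Lemma T1_idem : mulB p p = p.
Proof. by have := T1_T1_star; rewrite star_T1. Qed.

(* With X := T u we have X X^* = X^* X = p, so w := X - p X satisfies w w^* = 0. *)
Lemma T1_mul_unitary u : unitary u -> mulB p (T u) = T u /\ mulB (T u) p = T u.
Proof.
case=> u_u' u'_u; have XX' := hom_mul_star u_u'; have X'X := hom_star_mul u'_u.
set X := T u in XX' X'X *; set X' := starB X in XX' X'X *.
split; apply/eqP; rewrite eq_sym -subr_eq0; apply/eqP.
- apply: (cmul_star_eq0 HB); rewrite (cstarB HB) (cstarM HB) star_T1 -/X'.
  rewrite (cmulBl HB) !(cmulBr HB) -!(cmulA HB) !(cmulA HB X X') XX'.
  by rewrite !T1_idem !subrr.
- apply: (cstar_mul_eq0 HB); rewrite (cstarB HB) (cstarM HB) star_T1 -/X'.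
  rewrite (cmulBl HB) !(cmulBr HB) -!(cmulA HB) !(cmulA HB X' X) X'X.
  by rewrite !T1_idem !subrr.
Qed.

Lemma T1_mul_T x : mulB p (T x) = T x /\ mulB (T x) p = T x.
Proof.
apply: (unitary_span HA Hone (P := fun x => mulB p (T x) = T x /\ mulB (T x) p = T x)).
- move=> a y z [py yp] [pz zp]; rewrite HT.
  by rewrite (cmulDr HB) (cmulZr HB) (cmulDl HB) (cmulZl HB) py yp pz zp.
- exact: T1_mul_unitary.
Qed.

Lemma T1_mulT x : mulB p (T x) = T x. Proof. by case: (T1_mul_T x). Qed.
Lemma T_mulT1 x : mulB (T x) p = T x. Proof. by case: (T1_mul_T x). Qed.

Lemma T1_mul_starT x : mulB p (starB (T x)) = starB (T x).
Proof. by rewrite -{1}star_T1 -(cstarM HB) T_mulT1. Qed.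

Lemma sqr_preservedZ (c : R[i]) x : c != 0 -> sqr_preserved (c *: x) -> sqr_preserved x.
Proof.
move=> c_neq0; rewrite (cmulZl HA) (cmulZr HA) scalerA !(C_linearZ HT).
rewrite (cmulZl HB) (cmulZr HB) scalerA => /scalerI; apply.
by rewrite mulf_neq0.
Qed.

Lemma sqr_preserved_one_sub x : sqr_preserved (one - x) -> sqr_preserved x.
Proof.
rewrite (cmulBl HA) !(cmulBr HA) !(cmul1l Hone) (cmul1r Hone) !(C_linearB HT).
rewrite (cmulBl HB) !(cmulBr HB) T1_idem T1_mulT T_mulT1.
by move=> /addrI/oppr_inj/addrI/oppr_inj.
Qed.

(* U and V invert T a and p - T a on the corner p B p, and U + V inverts T (a (1 - a)),
   since the inverse of a (1 - a) is a' + b'. *)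
Lemma sqr_preserved_invertible a a' b' :
  is_inverse a a' -> is_inverse (one - a) b' -> sqr_preserved a.
Proof.
move=> [aa' a'a] [ab' b'a].
set U := starB (T (starA a')); set V := starB (T (starA b')).
have TaU : mulB (T a) U = p by apply: hom_mul_star; rewrite (cstarK HA).
have TaV : mulB (p - T a) V = p.
  by rewrite -(C_linearB HT); apply: hom_mul_star; rewrite (cstarK HA).
have comm_a : mulA a (one - a) = mulA (one - a) a.
  by rewrite (cmulBr HA) (cmulBl HA) (cmul1r Hone) (cmul1l Hone).
have UV : mulB (U + V) (T (mulA a (one - a))) = p.
  rewrite /U /V -(cstarD HB) -(C_linearD HT) -(cstarD HA).
  apply: hom_star_mul; rewrite (cstarK HA) (cmulDl HA) {2}comm_a !(cmulA HA) a'a b'a.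
  by rewrite !(cmul1l Hone) subrK.
set Z := T a - mulB (T a) (T a).
have ZUV : mulB Z (U + V) = p.
  have Z_l : Z = mulB (p - T a) (T a) by rewrite (cmulBl HB) T1_mulT.
  have Z_r : Z = mulB (T a) (p - T a) by rewrite (cmulBr HB) T_mulT1.
  rewrite (cmulDr HB) {1}Z_l {1}Z_r -!(cmulA HB) TaU TaV.
  by rewrite (cmulBl HB) T1_idem T_mulT1 subrK.
have Zp : mulB Z p = Z by rewrite (cmulBl HB) T_mulT1 -(cmulA HB) T_mulT1.
have : Z = T a - T (mulA a a).
  by rewrite -Zp -UV (cmulA HB) ZUV T1_mulT (cmulBr HA) (cmul1r Hone) (C_linearB HT).
by rewrite /Z => /addrI/oppr_inj ->.
Qed.

Lemma sqr_preserved_small k : 2 * rnorm k <= 1 -> sqr_preserved k.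
Proof.
move=> k_small; have [y inv_y] := one_sub_invertible HA Hone k_small.
have Nk_small : 2 * rnorm (- k) <= 1 by rewrite rnormN.
have [z inv_z] := one_sub_invertible HA Hone Nk_small.
have half_neq0 : (2^-1 : R[i]) != 0 by rewrite invr_eq0 pnatr_eq0.
have inv_a := is_inverseZ HA half_neq0 inv_y.
have one_sub_a : one - 2^-1 *: (one - k) = 2^-1 *: (one - - k).
  rewrite -{1}(scale_half_mul2n one) -scalerBr [one *+ 2]mulr2n opprB.
  by rewrite addrACA subrr addr0 opprK.
have inv_1a : is_inverse (one - 2^-1 *: (one - k)) (2^-1^-1 *: z).
  by rewrite one_sub_a; exact: (is_inverseZ HA half_neq0 inv_z).
apply/sqr_preserved_one_sub/(sqr_preservedZ half_neq0).
exact: sqr_preserved_invertible inv_a inv_1a.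
Qed.

Lemma sqr_preserved_all x : sqr_preserved x.
Proof.
have [c c_gt0 small] := rnorm_scale_small x.
apply: sqr_preservedZ (sqr_preserved_small small).
by rewrite eq_complex /= eqxx andbT gt_eqF.
Qed.

Lemma T_jordan x y : T (mulA x y + mulA y x) = mulB (T x) (T y) + mulB (T y) (T x).
Proof.
have := sqr_preserved_all (x + y).
rewrite (cmulDl HA) !(cmulDr HA) !(C_linearD HT) (cmulDl HB) !(cmulDr HB).
rewrite !sqr_preserved_all !addrA => sqr_xy.
apply: (addrI (mulB (T x) (T x))); apply: (addIr (mulB (T y) (T y))).
by rewrite !addrA.
Qed.

Lemma T_triple x y : T (mulA (mulA x y) x) = mulB (mulB (T x) (T y)) (T x).
Proof.
apply: mulr2n_inj; rewrite /= -(C_linearMn HT) (cmul_triple HA) (cmul_triple HB).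
by rewrite (C_linearB HT) !T_jordan sqr_preserved_all.
Qed.

Lemma T_star_unitary u : unitary u -> T (starA u) = starB (T u).
Proof.
move=> [u_u' u'_u]; have XX' := hom_mul_star u_u'; have X'X := hom_star_mul u'_u.
have XYX := T_triple u (starA u); rewrite u_u' (cmul1l Hone) in XYX.
set X := T u in XX' X'X XYX *; set Y := T (starA u) in XYX *.
have : starB X = mulB (mulB (starB X) (mulB (mulB X Y) X)) (starB X).
  by rewrite -XYX X'X T1_mul_starT.
by rewrite !(cmulA HB) X'X -(cmulA HB) XX' T1_mulT T_mulT1 => ->.
Qed.

Lemma T_star x : T (starA x) = starB (T x).
Proof.
apply: (unitary_span HA Hone (P := fun x => T (starA x) = starB (T x))).
- move=> a y z Py Pz.
  by rewrite (cstar_conjlinear HA) !HT Py Pz (cstar_conjlinear HB).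
- exact: T_star_unitary.
Qed.

End StarHomAtOne.

Theorem theorem2p5 (R : realType) (A B : completeNormedModType R[i])
  (mulA : A -> A -> A) (starA : A -> A) (mulB : B -> B -> B) (starB : B -> B)
  (HA : is_cstar_algebra mulA starA) (HB : is_cstar_algebra mulB starB)
  (one : A) (Hone : is_unit_elt mulA one)
  (T : A -> B) (HT : is_C_linear T)
  (Hhom : star_hom_at mulA starA mulB starB T one) :
  jordan_star_hom mulA starA mulB starB T.
Proof.
split; first exact: HT.
split=> [a b | x].
- by rewrite /jordan (C_linearZ HT) (T_jordan HA HB Hone HT Hhom).
- exact: (T_star HA HB Hone HT Hhom).
Qed.
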